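(* Let $A$ and $B$ be non-clopen subsets of a finite topological space $X$ which are separated (i.e. $\overline{A}\cap B=A\cap\overline{B}=\emptyset$). Let $\tilde A=\{a\in Cent_X(A)\mid \Psi(a,\partial_X(B))<rad_X(A)\}$ and $\tilde B=\{b\in Cent_X(B)\mid \Psi(b,\partial_X(A))<rad_X(B)\}$. Then $rad_X(A\cup B)\le\max\{rad_X(A),rad_X(B)\}$. Moreover: (i) if $rad_X(A)>rad_X(B)$ and $Cent_X(A)\setminus\tilde A\ne\emptyset$, then $Cent_X(A\cup B)=Cent_X(A)\setminus\tilde A$ and $rad_X(A\cup B)=rad_X(A)$; (ii) if $rad_X(A)=rad_X(B)$ and $(Cent_X(A)\setminus\tilde A)\cup(Cent_X(B)\setminus\tilde B)\ne\emptyset$, then $Cent_X(A\cup B)=(Cent_X(A)\setminus\tilde A)\cup(Cent_X(B)\setminus\tilde B)$ and $rad_X(A\cup B)=rad_X(A)=rad_X(B)$.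
   Context: For a finite topological space $X$ and $x\in X$, $U_x$ denotes the minimal open set containing $x$. A nested sequence of open sets around $x$ is a finite sequence $U_0\subsetneq U_1\subsetneq\cdots\subsetneq U_m=X$ of open sets with $U_0=U_x$ such that for each $j$ there is no open set $V$ with $U_j\subsetneq V\subsetneq U_{j+1}$. The furtherness function $\Psi:X\times X\to\{0,1,\dots,|X|-1\}$ is defined by: $\Psi(x,y)$ is the smallest integer $k\ge 0$ such that there exists a nested sequence $(U_j)_{j\ge0}$ of open sets around $x$ with $y\in U_k$. For $a\in X$ and $B\subseteq X$, $\Psi(a,B)=\min_{b\in B}\Psi(a,b)$, and for $A,B\subseteq X$, $\Psi(A,B)=\min_{a\in A}\Psi(a,B)$, with the value $\infty$ (larger than every integer) if $A$ or $B$ is empty. $\partial_X(A)$ denotes the boundary of $A$ in $X$. The center of $A$ is $Cent_X(A)=\{a\in A\mid \Psi(a,\partial_X(A))\ge\Psi(b,\partial_X(A))\ \forall b\in A\}$, and the radius is $rad_X(A)=\Psi(Cent_X(A),\partial_X(A))$ (equal to $\Psi(a,\partial_X(A))$ for any $a\in Cent_X(A)$). *)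

From mathcomp Require Import all_boot all_order.
From mathcomp Require Import boolp.
Set Implicit Arguments. Unset Strict Implicit. Unset Printing Implicit Defensive.

Section FiniteTopology.
Variable T : finType.
Variable tau : {set {set T}}.

Definition is_topology : Prop :=
  [/\ set0 \in tau, [set: T] \in tau,
      {in tau &, forall U V, U :|: V \in tau} &
      {in tau &, forall U V, U :&: V \in tau}].

Definition ftop_open (U : {set T}) : bool := U \in tau.
Definition ftop_closed (F : {set T}) : bool := ~: F \in tau.

Definition Umin (x : T) : {set T} := \bigcap_(U in tau | x \in U) U.

Definition interior (A : {set T}) : {set T} := \bigcup_(U in tau | U \subset A) U.
Definition closure (A : {set T}) : {set T} := ~: interior (~: A).
Definition bd (A : {set T}) : {set T} := closure A :\: interior A.

Definition covers (U V : {set T}) : bool :=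
  (U \proper V) && [forall W in tau, ~~ ((U \proper W) && (W \proper V))].

(* A nested sequence of open sets around x is U_x :: s, i.e.
   U_0 = U_x, U_1, ..., U_m = X, with U_k = nth setT (Umin x :: s) k. *)
Definition nested (x : T) (s : seq {set T}) : Prop :=
  [/\ all ftop_open s, path covers (Umin x) s & last (Umin x) s = [set: T]].

(* Furtherness Psi(x,y): least k such that y \in U_k for some nested sequence
   around x.  Its value lies in {0,..,|X|-1}, so a search over iota 0 #|T|
   is exhaustive. *)
Definition Psi (x y : T) : nat :=
  find (fun k => `[< exists s, nested x s /\ k <= size s /\
                                y \in nth setT (Umin x :: s) k >])
       (iota 0 #|T|).

End FiniteTopology.

(* Naturals extended with infinity (value of Psi on empty sets). *)
Inductive enat := Fin of nat | Inf.

Definition ele (a b : enat) : bool :=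
  match a, b with
  | _, Inf => true
  | Inf, Fin _ => false
  | Fin m, Fin n => (m <= n)%N
  end.
Definition elt (a b : enat) : bool := ~~ ele b a.
Definition emin (a b : enat) : enat := if ele a b then a else b.
Definition emax (a b : enat) : enat := if ele a b then b else a.

Section Center.
Variables (T : finType) (tau : {set {set T}}).

Definition PsiS (a : T) (B : {set T}) : enat :=
  \big[emin/Inf]_(b in B) Fin (Psi tau a b).
Definition PsiSS (A B : {set T}) : enat :=
  \big[emin/Inf]_(a in A) PsiS a B.

Definition Cent (A : {set T}) : {set T} :=
  [set a in A | [forall b in A, ele (PsiS b (bd tau A)) (PsiS a (bd tau A))]].

Definition rad (A : {set T}) : enat := PsiSS (Cent A) (bd tau A).

Definition separated (A B : {set T}) : Prop :=
  closure tau A :&: B = set0 /\ A :&: closure tau B = set0.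

Definition clopen (A : {set T}) : bool := ftop_open tau A && ftop_closed tau A.

End Center.

(* The boundary of a union of separated sets is the union of their boundaries,
   so Psi(y, bd(A u B)) = min (Psi(y, bd A), Psi(y, bd B)).  On A this is at most
   Psi(y, bd A) <= rad A, on B at most rad B, which bounds rad(A u B).  When the
   maximum rad A is attained on A u B, the attaining points are exactly the
   centres of A (resp. of B, in the equal-radii case) that are at least rad A
   away from the other boundary, i.e. Cent A minus the shallow centres A~. *)
From Pilot Require Import Defs.
From mathcomp Require Import all_boot all_order.
Set Implicit Arguments. Unset Strict Implicit. Unset Printing Implicit Defensive.

Lemma ele_refl a : ele a a. Proof. by case: a => //= n. Qed.

Lemma ele_trans a b c : ele a b -> ele b c -> ele a c.
Proof. by case: a => [x|]; case: b => [y|]; case: c => [z|] //=; apply: leq_trans. Qed.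

Lemma ele_total a b : ele a b || ele b a.
Proof. by case: a => [x|]; case: b => [y|] //=; apply: leq_total. Qed.

Lemma ele_anti a b : ele a b -> ele b a -> a = b.
Proof.
by case: a => [x|]; case: b => [y|] //= le_xy le_yx; rewrite (@anti_leq x y) ?le_xy.
Qed.

Lemma elt_ele a b : elt a b -> ele a b.
Proof. by rewrite /elt; have := ele_total a b; case: (ele b a); rewrite ?orbF. Qed.

Lemma ele_emin z a b : ele z (emin a b) = ele z a && ele z b.
Proof.
rewrite /emin; case: ifP => le_ab.
  by rewrite andb_idr // => /ele_trans; apply.
rewrite andb_idl // => /ele_trans; apply.
by have := ele_total a b; rewrite le_ab.
Qed.

Lemma ele_emaxl a b : ele a (emax a b).
Proof. by rewrite /emax; case: ifP => // _; apply: ele_refl. Qed.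

Lemma ele_emaxr a b : ele b (emax a b).
Proof.
rewrite /emax; case: ifP => [_|le_ab]; first exact: ele_refl.
by have := ele_total a b; rewrite le_ab.
Qed.

Lemma ele_big_emin_seq (I : Type) (r : seq I) (P : pred I) (F : I -> enat) z :
  ele z (\big[emin/Inf]_(i <- r | P i) F i) = all (fun i => P i ==> ele z (F i)) r.
Proof.
elim: r => [|i r IH]; first by rewrite big_nil; case: z.
by rewrite big_cons /=; case: (P i); rewrite /= ?ele_emin IH.
Qed.

Lemma ele_big_emin (I : finType) (S : {set I}) (F : I -> enat) z :
  ele z (\big[emin/Inf]_(i in S) F i) = [forall (i | i \in S), ele z (F i)].
Proof.
rewrite ele_big_emin_seq; apply/allP/forall_inP => [le_zF i iS | le_zF i _].
  exact: implyP (le_zF i (mem_index_enum i)) iS.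
by apply/implyP; apply: le_zF.
Qed.

Lemma big_emin_ele (I : finType) (S : {set I}) (F : I -> enat) i :
  i \in S -> ele (\big[emin/Inf]_(j in S) F j) (F i).
Proof.
have := ele_refl (\big[emin/Inf]_(j in S) F j).
by rewrite ele_big_emin => /forall_inP; apply.
Qed.

Lemma ex_emax_cons (I : eqType) (g : I -> enat) a r :
  exists2 c, c \in a :: r & {in a :: r, forall y, ele (g y) (g c)}.
Proof.
elim: r a => [|b r IH] a.
  by exists a => [|y]; rewrite ?mem_head // inE => /eqP ->; apply: ele_refl.
have [c cr hc] := IH b.
have [le_ac|le_ca] := orP (ele_total (g a) (g c)).
  exists c => [|y]; first by rewrite inE cr orbT.
  by rewrite inE => /predU1P [-> | /hc].
exists a => [|y]; first exact: mem_head.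
rewrite inE => /predU1P [-> | /hc le_yc]; first exact: ele_refl.
exact: ele_trans le_yc le_ca.
Qed.

Lemma ex_emax (I : finType) (S : {set I}) (g : I -> enat) :
  S != set0 -> exists2 c, c \in S & {in S, forall y, ele (g y) (g c)}.
Proof.
case/set0Pn => x xS; case E: (enum S) => [|a r]; first by rewrite -mem_enum E in xS.
have [c cr hc] := ex_emax_cons g a r.
by exists c => [|y yS]; [rewrite -mem_enum E | apply: hc; rewrite -E mem_enum].
Qed.

Section Topology.
Variables (T : finType) (tau : {set {set T}}).
Hypothesis Htop : is_topology tau.

Lemma interior_sub (X : {set T}) : interior tau X \subset X.
Proof. by apply/bigcupsP => U /andP []. Qed.

Lemma interiorS (X Y : {set T}) : X \subset Y -> interior tau X \subset interior tau Y.
Proof.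
move=> sXY; apply/bigcupsP => U /andP [Uo sUX].
by apply: bigcup_sup; rewrite Uo (subset_trans sUX sXY).
Qed.

Lemma interiorI (X Y : {set T}) :
  interior tau (X :&: Y) = interior tau X :&: interior tau Y.
Proof.
apply/eqP; rewrite eqEsubset subsetI !interiorS ?subsetIl ?subsetIr //=.
apply/subsetP => x; rewrite inE => /andP [/bigcupP [U /andP [Uo sUX] xU]].
case/bigcupP => V /andP [Vo sVY] xV; apply/bigcupP; exists (U :&: V).
  by case: Htop => _ _ _ openI; rewrite openI ?setISS.
by rewrite inE xU xV.
Qed.

Lemma closureU (X Y : {set T}) :
  Defs.closure tau (X :|: Y) = Defs.closure tau X :|: Defs.closure tau Y.
Proof. by rewrite /Defs.closure setCU interiorI setCI. Qed.

Lemma separated_sym (A B : {set T}) : separated tau A B -> separated tau B A.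
Proof. by case=> clA_B A_clB; split; rewrite setIC. Qed.

Lemma separated_interior (A B : {set T}) x :
  separated tau A B -> x \in A -> x \in interior tau (~: B).
Proof.
case=> _ /setP /(_ x); rewrite /Defs.closure !inE => A_clB xA.
by move: A_clB; rewrite xA; case: (x \in _).
Qed.

Lemma interiorU_separatedl (A B : {set T}) x : separated tau A B -> x \in A ->
  x \in interior tau (A :|: B) -> x \in interior tau A.
Proof.
move=> sepAB xA xU; have: x \in interior tau ((A :|: B) :&: ~: B).
  by rewrite interiorI inE xU (separated_interior sepAB xA).
by apply/subsetP/interiorS; rewrite setIUl setICr setU0 subsetIl.
Qed.

Lemma interiorU_separated (A B : {set T}) : separated tau A B ->
  interior tau (A :|: B) = interior tau A :|: interior tau B.
Proof.
move=> sepAB; apply/eqP; rewrite eqEsubset; apply/andP; split; last first.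
  by rewrite subUset !interiorS ?subsetUl ?subsetUr.
apply/subsetP => x xU; rewrite inE.
have /setUP [xA|xB] := subsetP (interior_sub _) x xU.
  by rewrite (interiorU_separatedl sepAB xA xU).
by rewrite setUC in xU; rewrite (interiorU_separatedl (separated_sym sepAB) xB xU) orbT.
Qed.

Lemma bdU_separated (A B : {set T}) : separated tau A B ->
  bd tau (A :|: B) = bd tau A :|: bd tau B.
Proof.
move=> sepAB; have sepBA := separated_sym sepAB.
have clA_intB x : x \in interior tau B -> x \notin Defs.closure tau A.
  move=> /(subsetP (interior_sub _)) /(separated_interior sepBA).
  by rewrite /Defs.closure inE negbK.
have clB_intA x : x \in interior tau A -> x \notin Defs.closure tau B.
  move=> /(subsetP (interior_sub _)) /(separated_interior sepAB).
  by rewrite /Defs.closure inE negbK.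
apply/setP => x; rewrite /bd closureU interiorU_separated // !(in_setD, in_setU).
case iA: (x \in interior tau A); case iB: (x \in interior tau B);
  by rewrite ?(negbTE (clB_intA _ iA)) ?(negbTE (clA_intB _ iB)) /= ?andbF ?orbF.
Qed.

End Topology.

Section Center.
Variables (T : finType) (tau : {set {set T}}).

Local Notation psi S y := (PsiS tau y (bd tau S)).

Lemma ele_PsiS z y (X : {set T}) :
  ele z (PsiS tau y X) = [forall (b | b \in X), ele z (Fin (Psi tau y b))].
Proof. exact: ele_big_emin. Qed.

Lemma ele_PsiSU z y (X Y : {set T}) :
  ele z (PsiS tau y (X :|: Y)) = ele z (PsiS tau y X) && ele z (PsiS tau y Y).
Proof.
rewrite !ele_PsiS; apply/forall_inP/andP => [le_z | []].
  by split; apply/forall_inP => b b_in; apply: le_z; rewrite inE b_in ?orbT.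
move=> /forall_inP le_zX /forall_inP le_zY.
by move=> b /setUP [/le_zX | /le_zY].
Qed.

Lemma CentP (S : {set T}) c :
  reflect (c \in S /\ {in S, forall y, ele (psi S y) (psi S c)}) (c \in Cent tau S).
Proof. by rewrite inE; apply: (iffP andP) => [] [cS /forall_inP]. Qed.

Lemma Cent_neq0 (S : {set T}) : S != set0 -> Cent tau S != set0.
Proof.
case/(ex_emax (fun y => psi S y)) => c cS max_c.
by apply/set0Pn; exists c; apply/CentP.
Qed.

Lemma rad_Cent (S : {set T}) c : c \in Cent tau S -> rad tau S = psi S c.
Proof.
move=> cC; apply: ele_anti; first exact: big_emin_ele.
have [cS _] := CentP _ _ cC.
by rewrite /rad /PsiSS ele_big_emin; apply/forall_inP => d /CentP [_ max_d]; apply: max_d.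
Qed.

Lemma le_rad (S : {set T}) y : y \in S -> ele (psi S y) (rad tau S).
Proof.
move=> yS; have /set0Pn [c cC] : Cent tau S != set0 by apply/Cent_neq0/set0Pn; exists y.
by rewrite (rad_Cent cC); case/CentP: cC => _; apply.
Qed.

Lemma in_Cent (S : {set T}) y :
  (y \in Cent tau S) = (y \in S) && ele (rad tau S) (psi S y).
Proof.
apply/idP/andP => [yC | [yS le_ry]].
  by rewrite (rad_Cent yC) ele_refl; case/CentP: yC.
by apply/CentP; split=> // z zS; apply: ele_trans (le_rad zS) le_ry.
Qed.

Lemma rad_set0 : rad tau set0 = Inf.
Proof. by rewrite /rad /PsiSS big_pred0 // => c; rewrite in_Cent in_set0. Qed.

Lemma rad_le (S : {set T}) r :
  S != set0 -> {in S, forall y, ele (psi S y) r} -> ele (rad tau S) r.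
Proof.
move=> /Cent_neq0 /set0Pn [c cC] le_r; rewrite (rad_Cent cC).
by case/CentP: cC => cS _; apply: le_r.
Qed.

Lemma rad_max (S : {set T}) r c :
  c \in S -> ele r (psi S c) -> {in S, forall y, ele (psi S y) r} -> rad tau S = r.
Proof.
move=> cS le_rc le_r; apply: ele_anti; last exact: ele_trans le_rc (le_rad cS).
by apply: rad_le le_r; apply/set0Pn; exists c.
Qed.

End Center.

Section SeparatedUnion.
Variables (T : finType) (tau : {set {set T}}).
Hypothesis Htop : is_topology tau.
Variables A B : {set T}.
Hypothesis sepAB : separated tau A B.

Local Notation psi S y := (PsiS tau y (bd tau S)).

Lemma ele_PsiS_bdU z y : ele z (psi (A :|: B) y) = ele z (psi A y) && ele z (psi B y).
Proof. by rewrite bdU_separated // ele_PsiSU. Qed.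

Lemma PsiS_bdUl y : ele (psi (A :|: B) y) (psi A y).
Proof. by have := ele_refl (psi (A :|: B) y); rewrite ele_PsiS_bdU => /andP []. Qed.

Lemma PsiS_bdUr y : ele (psi (A :|: B) y) (psi B y).
Proof. by have := ele_refl (psi (A :|: B) y); rewrite ele_PsiS_bdU => /andP []. Qed.

Lemma PsiS_bdU_le r : ele (rad tau A) r -> ele (rad tau B) r ->
  {in A :|: B, forall y, ele (psi (A :|: B) y) r}.
Proof.
move=> le_Ar le_Br y /setUP [yA|yB].
  exact: ele_trans (PsiS_bdUl y) (ele_trans (le_rad tau yA) le_Ar).
exact: ele_trans (PsiS_bdUr y) (ele_trans (le_rad tau yB) le_Br).
Qed.

Lemma in_Cent_far y :
  (y \in Cent tau A :\: [set a in Cent tau A | elt (psi B a) (rad tau A)]) =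
  (y \in A) && ele (rad tau A) (psi (A :|: B) y).
Proof.
rewrite in_setD in_set /elt in_Cent ele_PsiS_bdU.
by case: (y \in A); case: (ele (rad tau A) (psi A y)); rewrite /= ?negbK ?andbT.
Qed.

End SeparatedUnion.

Theorem theorem2p25 (T : finType) (tau : {set {set T}}) (Htop : is_topology tau)
  (A B : {set T}) (nA : ~~ clopen tau A) (nB : ~~ clopen tau B)
  (sep : separated tau A B) :
  let At := [set a in Cent tau A | elt (PsiS tau a (bd tau B)) (rad tau A)] in
  let Bt := [set b in Cent tau B | elt (PsiS tau b (bd tau A)) (rad tau B)] in
  ele (rad tau (A :|: B)) (emax (rad tau A) (rad tau B)) /\
  (elt (rad tau B) (rad tau A) -> Cent tau A :\: At != set0 ->
     Cent tau (A :|: B) = Cent tau A :\: At /\ rad tau (A :|: B) = rad tau A) /\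
  (rad tau A = rad tau B ->
     (Cent tau A :\: At) :|: (Cent tau B :\: Bt) != set0 ->
     Cent tau (A :|: B) = (Cent tau A :\: At) :|: (Cent tau B :\: Bt) /\
     rad tau (A :|: B) = rad tau A /\ rad tau A = rad tau B).
Proof.
rewrite /=; have sepBA := separated_sym sep.
have inA := in_Cent_far Htop sep; have inB := in_Cent_far Htop sepBA.
rewrite setUC in inB.
have radU c : c \in A :|: B -> ele (rad tau A) (PsiS tau c (bd tau (A :|: B))) ->
    ele (rad tau B) (rad tau A) -> rad tau (A :|: B) = rad tau A.
  move=> cAB le_Ac le_BA.
  exact: rad_max cAB le_Ac (PsiS_bdU_le Htop sep (ele_refl _) le_BA).
split; [|split].
- have [/eqP|AB0] := eqVneq (A :|: B) set0.
    by rewrite setU_eq0 => /andP [/eqP -> /eqP ->]; rewrite setU0 rad_set0.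
  exact: rad_le AB0 (PsiS_bdU_le Htop sep (ele_emaxl _ _) (ele_emaxr _ _)).
- move=> lt_BA /set0Pn [c]; rewrite inA => /andP [cA le_Ac].
  have radUA := radU c (subsetP (subsetUl A B) c cA) le_Ac (elt_ele lt_BA).
  split=> //; apply/setP => y; rewrite in_Cent radUA inA in_setU.
  case yA: (y \in A) => //=; apply/andP => [[yB le_Ay]]; move/negP: lt_BA; apply.
  exact: ele_trans le_Ay (ele_trans (PsiS_bdUr Htop sep y) (le_rad tau yB)).
- move=> eq_AB; rewrite -eq_AB in inB *.
  move=> /set0Pn [c]; rewrite in_setU inA inB -andb_orl -in_setU => /andP [cAB le_Ac].
  have radUA : rad tau (A :|: B) = rad tau A.
    by apply: radU cAB le_Ac _; rewrite eq_AB ele_refl.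
  split=> //; apply/setP => y.
  by rewrite in_Cent radUA !in_setU inA inB andb_orl.
Qed.
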